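(* Let $G$ be a connected graph that is not a path, not a cycle, and not the claw graph $K_{1,3}$. Then $L^n(G)$ is not representable for every integer $n \geqslant 4$.
   Context: All graphs are finite and simple. For a word $W$ over an alphabet, two distinct letters $x,y$ alternate in $W$ if both occur in $W$ and, after erasing all other letters from $W$, one obtains a word of the form $xyxy\ldots$ or $yxyx\ldots$ (an alternating word of any length). A graph $G=(V,E)$ is representable if there exists a word $W$ over the alphabet $V$ in which every vertex occurs, such that for all distinct $x,y\in V$, the letters $x$ and $y$ alternate in $W$ if and only if $(x,y)\in E$. The line graph $L(G)$ of a graph $G$ has the edges of $G$ as vertices, two of them being adjacent in $L(G)$ iff they share an endpoint in $G$. $L^n(G)$ denotes the graph obtained from $G$ by applying the line graph operation $n$ times. *)

(* Finite simple graphs as symmetric irreflexive relations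
   on a finType, packaged in a record so that the line graph can be iterated. *)
From mathcomp Require Import all_boot.
Set Implicit Arguments. Unset Strict Implicit. Unset Printing Implicit Defensive.

Record sgraph := SGraph {
  vert :> finType;
  adj : rel vert;
  adj_sym : symmetric adj;
  adj_irr : irreflexive adj }.

Definition is_edge (G : sgraph) (e : {set G}) : bool :=
  [exists x : G, exists y : G, adj x y && (e == [set x; y])].

Definition edge_type (G : sgraph) : finType := {e : {set G} | is_edge e}.

Definition line_adj (G : sgraph) : rel (edge_type G) :=
  fun e f => (val e != val f) && (val e :&: val f != set0).

Lemma line_adj_sym (G : sgraph) : symmetric (@line_adj G).
Proof. by move=> e f; rewrite /line_adj eq_sym setIC. Qed.

Lemma line_adj_irr (G : sgraph) : irreflexive (@line_adj G).
Proof. by move=> e; rewrite /line_adj eqxx. Qed.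

Definition line_graph (G : sgraph) : sgraph :=
  SGraph (@line_adj_sym G) (@line_adj_irr G).

Fixpoint iter_line (n : nat) (G : sgraph) : sgraph :=
  match n with 0 => G | n'.+1 => line_graph (iter_line n' G) end.

Definition isomorphic (G H : sgraph) : Prop :=
  exists f : G -> H, bijective f /\ forall x y, adj (f x) (f y) = adj x y.

Definition connected (G : sgraph) : Prop :=
  0 < #|G| /\ forall x y : G, connect (@adj G) x y.

Definition path_rel (k : nat) : rel 'I_k :=
  fun i j => (i.+1 == j :> nat) || (j.+1 == i :> nat).
Lemma path_rel_sym (k : nat) : symmetric (@path_rel k).
Proof. by move=> i j; rewrite /path_rel orbC. Qed.
Lemma path_rel_irr (k : nat) : irreflexive (@path_rel k).
Proof. by move=> i; rewrite /path_rel orbb; apply/negbTE; rewrite neq_ltn ltnSn orbT. Qed.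
Definition path_graph (k : nat) : sgraph := SGraph (@path_rel_sym k) (@path_rel_irr k).

Definition cycle_rel (k : nat) : rel 'I_k :=
  fun i j => (i != j) && ((i.+1 %% k == j :> nat) || (j.+1 %% k == i :> nat)).
Lemma cycle_rel_sym (k : nat) : symmetric (@cycle_rel k).
Proof. by move=> i j; rewrite /cycle_rel eq_sym orbC. Qed.
Lemma cycle_rel_irr (k : nat) : irreflexive (@cycle_rel k).
Proof. by move=> i; rewrite /cycle_rel eqxx. Qed.
Definition cycle_graph (k : nat) : sgraph := SGraph (@cycle_rel_sym k) (@cycle_rel_irr k).

Definition claw_rel : rel 'I_4 :=
  fun i j => ((i == 0 :> nat) && (j != 0 :> nat)) || ((j == 0 :> nat) && (i != 0 :> nat)).
Lemma claw_rel_sym : symmetric claw_rel.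
Proof. by move=> i j; rewrite /claw_rel orbC. Qed.
Lemma claw_rel_irr : irreflexive claw_rel.
Proof. by move=> i; rewrite /claw_rel; case: (i == 0 :> nat). Qed.
Definition claw_graph : sgraph := SGraph claw_rel_sym claw_rel_irr.

Definition is_path (G : sgraph) : Prop := exists k, isomorphic G (path_graph k).
Definition is_cycle (G : sgraph) : Prop := exists k, 3 <= k /\ isomorphic G (cycle_graph k).
Definition is_claw (G : sgraph) : Prop := isomorphic G claw_graph.

(* x and y alternate in W: both occur, and after erasing all other letters
   no two consecutive letters are equal (i.e. the word is xyxy... or yxyx...). *)
Definition alternate (T : eqType) (W : seq T) (x y : T) : bool :=
  [&& x \in W, y \in W &
      sorted (fun a b => a != b) [seq z <- W | (z == x) || (z == y)]].

Definition representable (G : sgraph) : Prop :=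
  exists W : seq G, (forall x : G, x \in W) /\
    forall x y : G, x != y -> (alternate W x y <-> adj x y).

From mathcomp Require Import all_boot zify.
From Stdlib Require Import Classical.
Set Implicit Arguments. Unset Strict Implicit. Unset Printing Implicit Defensive.

(* A word representing a graph orients it: x -> y when, once all other letters are
   erased, the word reads x y x y ...  Counting letters in prefixes shows that this
   orientation has no directed cycle of length 3 or 4, and that a path a -> b -> c -> d
   together with a -> d forces the chords a -> c and b -> d.  An exhaustive search over
   the 18 edges of the line graph of the wheel W4 finds no such orientation, so the line
   graph of any graph containing W4 is not representable.
   A connected graph that is neither a path, a cycle nor the claw contains a claw plus a
   further edge touching it.  Its line graph then contains a triangle with a pendant edge
   (a paw), which the line graph operation preserves; the line graph of a paw contains a
   diamond, and that of a diamond contains W4.  Hence L^(n-1)(G) contains W4 for n >= 4. *)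

Section Words.
Variable T : eqType.
Implicit Types (W : seq T) (x y : T).

(* Once all letters other than x and y are erased, W reads x y x y ... *)
Definition leads W x y : bool :=
  path (fun a b => a != b) y [seq z <- W | (z == x) || (z == y)].

Lemma leadsP W x y : x != y ->
  reflect (forall n, count_mem y (take n W) <= count_mem x (take n W)
                       <= (count_mem y (take n W)).+1)
          (leads W x y).
Proof.
elim: W x y => [|z W IH] x y xy; first by rewrite /leads; apply: ReflectT => n /=.
have yx : y != x by rewrite eq_sym.
rewrite /leads /=; case: (eqVneq z x) => [->|zx] /=.
  rewrite yx /= -(eq_filter (fun z => orbC (z == y) (z == x))).
  apply: (iffP (IH y x yx)) => H n.
    by case: n => [|n] //=; have := H n; rewrite eqxx (negbTE xy); lia.
  by have := H n.+1; rewrite /= eqxx (negbTE xy); lia.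
case: (eqVneq z y) => [->|zy] /=.
  by rewrite eqxx; apply: ReflectF => /(_ 1); rewrite /= take0 eqxx (negbTE yx).
apply: (iffP (IH x y xy)) => H n.
  by case: n => [|n] //=; rewrite (negbTE zx) (negbTE zy); apply: H.
by have := H n.+1; rewrite /= (negbTE zx) (negbTE zy).
Qed.

Lemma alternateE W x y : x != y ->
  alternate W x y = [&& x \in W, y \in W & leads W x y || leads W y x].
Proof.
move=> xy; rewrite /alternate /leads (eq_filter (fun z => orbC (z == y) (z == x))).
case: (x \in W) (y \in W) => [] [] //=.
have := filter_all (fun z => (z == x) || (z == y)) W.
case: [seq _ <- _ | _] => [|h s] //= /andP[/orP[]/eqP-> _].
  by rewrite eqxx (eq_sym y) xy /= orbF.
by rewrite eqxx xy.
Qed.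

Lemma leadsxx W x : x \in W -> leads W x x = false.
Proof.
move=> xW; rewrite /leads; have := filter_all (fun z => (z == x) || (z == x)) W.
have : x \in [seq z <- W | (z == x) || (z == x)] by rewrite mem_filter eqxx xW.
by case: [seq _ <- _ | _] => [|h s] //= _ /andP[/orP[]/eqP-> _]; rewrite eqxx.
Qed.

Lemma leads_asym W x y : x \in W -> leads W x y -> leads W y x -> False.
Proof.
case: (eqVneq x y) => [<- xW|xy xW]; first by rewrite leadsxx.
have yx : y != x by rewrite eq_sym.
move=> /(leadsP W xy) Hxy /(leadsP W yx) Hyx.
have ltn : index x W < size W by rewrite index_mem.
have := Hxy (index x W); have := Hyx (index x W).+1.
by rewrite (take_nth x ltn) nth_index // -!cats1 !count_cat /= eqxx (negbTE xy); lia.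
Qed.

Lemma leads_cycle3 W a b c : a != b -> b != c -> c != a ->
  leads W a b -> leads W b c -> leads W c a -> leads W b a.
Proof.
move=> ab bc ca /(leadsP W ab) H1 /(leadsP W bc) H2 /(leadsP W ca) H3.
by apply/leadsP; [rewrite eq_sym | move=> n; have := H1 n; have := H2 n; have := H3 n; lia].
Qed.

Lemma leads_cycle4 W a b c d : a != b -> b != c -> c != d -> d != a ->
  leads W a b -> leads W b c -> leads W c d -> leads W d a -> leads W b a.
Proof.
move=> ab bc cd da /(leadsP W ab) H1 /(leadsP W bc) H2 /(leadsP W cd) H3 /(leadsP W da) H4.
apply/leadsP; first by rewrite eq_sym.
by move=> n; have := H1 n; have := H2 n; have := H3 n; have := H4 n; lia.
Qed.

Lemma leads_shortcut4 W a b c d : a != b -> b != c -> c != d -> a != d -> a != c -> b != d ->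
  leads W a b -> leads W b c -> leads W c d -> leads W a d -> leads W a c && leads W b d.
Proof.
move=> ab bc cd ad ac bd.
move=> /(leadsP W ab) H1 /(leadsP W bc) H2 /(leadsP W cd) H3 /(leadsP W ad) H4.
by apply/andP; split; apply/leadsP => // n;
  have := H1 n; have := H2 n; have := H3 n; have := H4 n; lia.
Qed.
End Words.

(* The constraints that a semi-transitive orientation [Halldorsson, Kitaev, Pyatkin]
   places on at most four vertices: R orients the edges of E, has no directed cycle of
   length 3 or 4, and a path a -> b -> c -> d with a -> d has both chords. *)
Record semi_transitive4 (T : Type) (E R : rel T) : Prop := {
  st4_sub : subrel R E;
  st4_total : forall x y, E x y -> R x y || R y x;
  st4_asym : forall x y, R x y -> R y x -> False;
  st4_cycle3 : forall a b c, R a b -> R b c -> R c a -> False;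
  st4_cycle4 : forall a b c d, R a b -> R b c -> R c d -> R d a -> False;
  st4_shortcut : forall a b c d, R a b -> R b c -> R c d -> R a d -> R a c && R b d }.

Lemma semi_transitive4_relpre (T U : Type) (f : T -> U) (E : rel T) (F R : rel U) :
  (forall x y, F (f x) (f y) = E x y) ->
  semi_transitive4 F R -> semi_transitive4 E (relpre f R).
Proof.
move=> fE [sub tot asym c3 c4 sc].
split=> [x y|x y|x y|a b c|a b c d|a b c d] /=; rewrite -?fE;
  [exact: sub | exact: tot | exact: asym | exact: c3 | exact: c4 | exact: sc].
Qed.

Lemma adj_neq (G : sgraph) (u v : G) : adj u v -> u != v.
Proof. by apply: contraTneq => ->; rewrite adj_irr. Qed.

Lemma representable_semi_transitive4 (K : sgraph) :
  representable K -> exists R : rel K, semi_transitive4 (@adj K) R.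
Proof.
move=> [W [Wall Wrep]].
have alt x y : x != y -> adj x y = leads W x y || leads W y x.
  move=> xy; apply/idP/idP => [/(Wrep _ _ xy)|h].
    by rewrite alternateE // => /and3P[].
  by apply/(Wrep _ _ xy); rewrite alternateE // !Wall.
have sub : subrel (leads W) (@adj K).
  move=> x y; case: (eqVneq x y) => [->|xy]; first by rewrite leadsxx.
  by rewrite alt // => ->.
have neq x y : leads W x y -> x != y by move/sub/adj_neq.
exists (leads W); split=> //.
- by move=> x y xy; rewrite -alt ?adj_neq.
- by move=> x y; apply: leads_asym.
- move=> a b c ab bc ca; apply: (leads_asym (Wall a) ab).
  exact: leads_cycle3 (neq _ _ ab) (neq _ _ bc) (neq _ _ ca) ab bc ca.
- move=> a b c d ab bc cd da; apply: (leads_asym (Wall a) ab).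
  exact: leads_cycle4 (neq _ _ ab) (neq _ _ bc) (neq _ _ cd) (neq _ _ da) ab bc cd da.
- move=> a b c d ab bc cd ad.
  have ac : a != c.
    by apply: contraTneq ab => ->; apply/negP => cb; apply: leads_asym (Wall c) cb bc.
  have bd : b != d.
    by apply: contraTneq bc => ->; apply/negP => dc; apply: leads_asym (Wall d) dc cd.
  exact: leads_shortcut4 (neq _ _ ab) (neq _ _ bc) (neq _ _ cd) (neq _ _ ad) ac bd ab bc cd ad.
Qed.

Definition edges_meet (A : eqType) (u v w z : A) : bool :=
  ~~ ((u == w) && (v == z) || (u == z) && (v == w)) && [|| u == w, u == z, v == w | v == z].

Lemma edges_meet_sym (A : eqType) (u v w z : A) : edges_meet u v w z = edges_meet w z u v.
Proof.
rewrite /edges_meet (eq_sym w u) (eq_sym z v) (eq_sym w v) (eq_sym z u).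
by case: (u == w); case: (v == z); case: (u == z); case: (v == w).
Qed.

Lemma edges_meet_refl (A : eqType) (u v : A) : edges_meet u v u v = false.
Proof. by rewrite /edges_meet !eqxx. Qed.

Lemma edges_meet_inj (A B : eqType) (f : A -> B) (D : {pred A}) u v w z :
  {in D &, injective f} -> u \in D -> v \in D -> w \in D -> z \in D ->
  edges_meet (f u) (f v) (f w) (f z) = edges_meet u v w z.
Proof.
move=> finj uD vD wD zD; rewrite /edges_meet.
by rewrite !(inj_in_eq finj uD wD) !(inj_in_eq finj uD zD)
           !(inj_in_eq finj vD wD) !(inj_in_eq finj vD zD).
Qed.

(* The edges of the wheel W4 with hub 0 and rim 1 2 3 4; the default (0, 1) makes
   every index denote an edge. *)
Definition w4_edge (i : nat) : nat * nat :=
  nth (0, 1) [:: (0, 1); (0, 2); (0, 3); (0, 4); (1, 2); (2, 3); (3, 4); (4, 1)] i.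

Definition lw4_adj (i j : nat) : bool :=
  edges_meet (w4_edge i).1 (w4_edge i).2 (w4_edge j).1 (w4_edge j).2.

Definition pairs8 : seq (nat * nat) := [seq (i, j) | i <- iota 0 8, j <- iota 0 8].

Definition lw4_edges : seq (nat * nat) := [seq p <- pairs8 | (p.1 < p.2) && lw4_adj p.1 p.2].

(* An orientation of the line graph of W4 is a bit vector indexed by lw4_edges.  The
   literal (i, j) asserts that the edge i j is oriented from i to j; lit_index compiles
   it to a position in that vector and the expected bit. *)
Definition lit_index (l : nat * nat) : nat * bool :=
  if l \in lw4_edges then (index l lw4_edges, true) else (index (l.2, l.1) lw4_edges, false).

Definition lit_holds (o : seq bool) (kb : nat * bool) : bool :=
  (kb.1 < size o) && (nth false o kb.1 == kb.2).

(* Each clause lists literals that cannot hold together in a semi-transitive orientation. *)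
Definition cycle3_clause (a b c : nat) : seq (nat * nat) := [:: (a, b); (b, c); (c, a)].

Definition quad_clauses (a b c d : nat) : seq (seq (nat * nat)) :=
  [:: [:: (a, b); (b, c); (c, d); (d, a)];
      [:: (a, b), (b, c), (c, d), (a, d) & if lw4_adj a c then [:: (c, a)] else [::]];
      [:: (a, b), (b, c), (c, d), (a, d) & if lw4_adj b d then [:: (d, b)] else [::]]].

Definition lw4_clauses : seq (seq (nat * nat)) :=
  [seq cl <- [seq cycle3_clause a p.1 p.2 | a <- iota 0 8, p <- pairs8]
             ++ flatten [seq quad_clauses p.1 p.2 q.1 q.2 | p <- pairs8, q <- pairs8]
   | all (fun l => lw4_adj l.1 l.2) cl].

(* Conditionals, unlike || and &&, are evaluated lazily by vm_compute: this prunes the search. *)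
Fixpoint refutes (cls : seq (seq (nat * bool))) (n : nat) (o : seq bool) : bool :=
  if has (all (lit_holds o)) cls then true else
  if n is n'.+1 then
    if refutes cls n' (rcons o true) then refutes cls n' (rcons o false) else false
  else false.

Lemma lw4_refuted : refutes [seq map lit_index cl | cl <- lw4_clauses] 18 [::].
Proof. by vm_compute. Qed.

Lemma refutesP cls n o : refutes cls n o ->
  forall bs, size bs = n -> has (all (lit_holds (o ++ bs))) cls.
Proof.
have holds_cat bs o' : subpred (all (lit_holds o')) (all (lit_holds (o' ++ bs))).
  move=> cl /allP H; apply/allP=> kb /H /andP[lt e].
  by rewrite /lit_holds size_cat nth_cat lt ltn_addr.
elim: n o => [|n IH] o /=.
  by case: ifP => // H _ bs _; apply: sub_has (holds_cat bs o) _ H.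
case: ifP => [H _ bs _|_]; first exact: sub_has (holds_cat bs o) _ H.
case: ifP => // /IH H1 /IH H2 [|[] bs] //= [hs]; rewrite -cat_rcons; [exact: H1 | exact: H2].
Qed.

Section LW4.
Variable R : rel nat.
Hypothesis st : semi_transitive4 lw4_adj R.

Let bs := [seq R p.1 p.2 | p <- lw4_edges].

Lemma lit_index_holds i j : i < 8 -> j < 8 -> lw4_adj i j ->
  lit_holds bs (lit_index (i, j)) = R i j.
Proof.
move=> hi hj ij; rewrite /lit_index /lit_holds /bs size_map; set E := lw4_edges.
have edgeE x y : x < 8 -> y < 8 -> x < y -> lw4_adj x y -> (x, y) \in E.
  by move=> hx hy xy a; rewrite mem_filter /= xy a (allpairs_f (fun a b => (a, b))) ?mem_iota.
case: ifP => [e|ne]; cbn [fst snd].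
  by rewrite index_mem e (nth_map (0, 0)) ?index_mem // nth_index // eqb_id.
have e : (j, i) \in E.
  apply: (edgeE j i); rewrite /lw4_adj 1?edges_meet_sym //.
  case: (ltngtP i j) => // [lt|eq]; first by rewrite edgeE in ne.
  by move: ij; rewrite /lw4_adj eq edges_meet_refl.
rewrite index_mem e (nth_map (0, 0)) ?index_mem // nth_index //.
have := st4_total st ij; have := @st4_asym _ _ _ st i j.
by case: (R i j); case: (R j i) => // /(_ isT isT).
Qed.

Lemma lw4_not_semi_transitive4 : False.
Proof.
have [sub _ asym cycle3 cycle4 shortcut] := st.
have /(refutesP lw4_refuted) : size bs = 18 by rewrite size_map.
move=> /hasP[_ /mapP[cl cl_in ->] /allP holds].
move: cl_in; rewrite mem_filter => /andP[/allP cl_adj].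
have Rl x y : x < 8 -> y < 8 -> (x, y) \in cl -> R x y.
  move=> hx hy xy; rewrite -lit_index_holds //; last exact: (cl_adj _ xy).
  exact/holds/map_f.
have pairs8P p : p \in pairs8 -> p.1 < 8 /\ p.2 < 8.
  by case/allpairsP=> [[x y] []]; rewrite !mem_iota => /andP[_ ?] /andP[_ ?] ->.
rewrite mem_cat => /orP[/allpairsP[[a [b c]] []]|/flattenP[cls /allpairsP[[[a b] [c d]] []]]];
  cbn [fst snd].
  rewrite mem_iota => /andP[_ ha] /pairs8P[/= hb hc] ?; subst cl.
  by apply: (cycle3 a b c); apply: Rl; rewrite //= !inE eqxx ?orbT.
move=> /pairs8P[/= ha hb] /pairs8P[/= hc hd] -> {cls}.
rewrite !inE => /or3P[]/eqP ?; subst cl.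
- by apply: (cycle4 a b c d); apply: Rl; rewrite //= !inE eqxx ?orbT.
- have /andP[ac _] : R a c && R b d by apply: shortcut; apply: Rl; rewrite //= !inE eqxx ?orbT.
  by apply: (asym a c ac); apply: Rl => //; rewrite (sub _ _ ac) !inE eqxx ?orbT.
- have /andP[_ bd] : R a c && R b d by apply: shortcut; apply: Rl; rewrite //= !inE eqxx ?orbT.
  by apply: (asym b d bd); apply: Rl => //; rewrite (sub _ _ bd) !inE eqxx ?orbT.
Qed.

End LW4.

Section Sets.
Variable T : finType.

Lemma set2_eq (u v w z : T) : u != v ->
  ([set u; v] == [set w; z]) = ((u == w) && (v == z)) || ((u == z) && (v == w)).
Proof.
move=> uv; apply/idP/idP.
  move=> /eqP E.
  have hu : u \in [set w; z] by rewrite -E set21.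
  have hv : v \in [set w; z] by rewrite -E set22.
  have hw : w \in [set u; v] by rewrite E set21.
  have hz : z \in [set u; v] by rewrite E set22.
  move: hu hv hw hz; rewrite !in_set2.
  case/orP=> /eqP eu; case/orP=> /eqP ev; subst; rewrite ?eqxx ?orbT //; by rewrite eqxx in uv.
case/orP=> /andP [/eqP -> /eqP ->] //; by rewrite setUC.
Qed.

Lemma set2_meet (u v w z : T) :
  ([set u; v] :&: [set w; z] != set0) = [|| u == w, u == z, v == w | v == z].
Proof.
apply/set0Pn/idP.
  case=> t; rewrite inE !in_set2 => /andP[/orP[]/eqP-> /orP[]/eqP->];
  by rewrite eqxx ?orbT.
by case/or4P=> /eqP->; [exists w|exists z|exists w|exists z]; rewrite inE !in_set2 !eqxx ?orbT.
Qed.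
End Sets.

Section LineGraph.
Variable G : sgraph.

Lemma edge_set2 (u v : G) : adj u v -> is_edge [set u; v].
Proof. by move=> h; apply/existsP; exists u; apply/existsP; exists v; rewrite h eqxx. Qed.

Definition mk_edge (u v : G) (h : adj u v) : line_graph G := exist _ [set u; v] (edge_set2 h).

Lemma mk_edge_adj (u v w z : G) (h1 : adj u v) (h2 : adj w z) :
  adj (mk_edge h1) (mk_edge h2) = edges_meet u v w z.
Proof. by rewrite /= /line_adj /= set2_eq ?adj_neq // set2_meet. Qed.

Lemma mk_edge_adjE (u v w z : G) (h1 : adj u v) (h2 : adj w z) :
  adj (mk_edge h1) (mk_edge h2) =
  ([set u; v] != [set w; z]) && ([set u; v] :&: [set w; z] != set0).
Proof. by []. Qed.

Lemma mk_edge_eq (u v w z : G) (h1 : adj u v) (h2 : adj w z) :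
  (mk_edge h1 == mk_edge h2) = ((u == w) && (v == z)) || ((u == z) && (v == w)).
Proof. by rewrite -val_eqE /= set2_eq ?adj_neq. Qed.
End LineGraph.

Lemma w4_edge_lt5 i : ((w4_edge i).1 < 5) && ((w4_edge i).2 < 5).
Proof. by case: i => [|[|[|[|[|[|[|[|i]]]]]]]]; rewrite /w4_edge /= ?nth_nil. Qed.

Definition has_W4 (G : sgraph) := exists h r1 r2 r3 r4 : G,
  [/\ adj h r1, adj h r2, adj h r3 & adj h r4] /\
  [/\ adj r1 r2, adj r2 r3, adj r3 r4 & adj r4 r1] /\ (r1 != r3) && (r2 != r4).

Lemma W4_line_not_representable (K : sgraph) : has_W4 K -> ~ representable (line_graph K).
Proof.
move=> [h [r1 [r2 [r3 [r4 [[a1 a2 a3 a4] [[b1 b2 b3 b4] /andP[n13 n24]]]]]]]].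
move=> /representable_semi_transitive4[R st].
pose s := [:: h; r1; r2; r3; r4]; pose w i := nth h s i.
have s_uniq : uniq s.
  by rewrite /= !inE !negb_or n13 n24 (eq_sym r1 r4) !adj_neq.
have w_edge i : adj (w (w4_edge i).1) (w (w4_edge i).2).
  by case: i => [|[|[|[|[|[|[|[|i]]]]]]]]; rewrite /w /w4_edge /= ?nth_nil.
pose f i := mk_edge (w_edge i).
have f_adj i j : adj (f i) (f j) = lw4_adj i j.
  have /andP[i1 i2] := w4_edge_lt5 i; have /andP[j1 j2] := w4_edge_lt5 j.
  by rewrite mk_edge_adj (edges_meet_inj (uniqP h s_uniq)).
exact: lw4_not_semi_transitive4 (semi_transitive4_relpre f_adj st).
Qed.

Definition has_paw (G : sgraph) := exists p q r s : G,
  [/\ adj p q, adj p r, adj q r, adj p s & (s != q) && (s != r)].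

Definition has_diamond (G : sgraph) := exists a b c d : G,
  [/\ adj a b, adj a c, adj b c, adj b d & adj c d && (a != d)].

Ltac neq_to_eqF := repeat match goal with
  | H : is_true (?x != ?y) |- _ => let E1 := fresh "E" in let E2 := fresh "E" in
      move: (H) => /negbTE E1; move: H; rewrite eq_sym => /negbTE E2 end.

Ltac eval_line_adj := rewrite ?mk_edge_adj ?mk_edge_eq /edges_meet;
  repeat match goal with E : (?a == ?b) = false |- context [?a == ?b] => rewrite E end;
  rewrite ?eqxx /= ?orbT.

Lemma paw_line_paw (G : sgraph) : has_paw G -> has_paw (line_graph G).
Proof.
move=> [p [q [r [s [pq pr qr ps /andP[sq sr]]]]]].
exists (mk_edge pq), (mk_edge pr), (mk_edge qr), (mk_edge ps).
move: (adj_neq pq) (adj_neq pr) (adj_neq qr) (adj_neq ps) => ? ? ? ?; neq_to_eqF.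
by split; eval_line_adj.
Qed.

Lemma paw_line_diamond (G : sgraph) : has_paw G -> has_diamond (line_graph G).
Proof.
move=> [p [q [r [s [pq pr qr ps /andP[sq sr]]]]]].
exists (mk_edge qr), (mk_edge pq), (mk_edge pr), (mk_edge ps).
move: (adj_neq pq) (adj_neq pr) (adj_neq qr) (adj_neq ps) => ? ? ? ?; neq_to_eqF.
by split; eval_line_adj.
Qed.

Lemma diamond_line_W4 (G : sgraph) : has_diamond G -> has_W4 (line_graph G).
Proof.
move=> [a [b [c [d [ab ac bc bd /andP[cd ad]]]]]].
exists (mk_edge bc), (mk_edge ab), (mk_edge ac), (mk_edge cd), (mk_edge bd).
move: (adj_neq ab) (adj_neq ac) (adj_neq bc) (adj_neq bd) (adj_neq cd) => ? ? ? ? ?.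
neq_to_eqF.
by split; [|split]; [split|split|]; eval_line_adj.
Qed.

Definition claw_at (G : sgraph) (v a b c : G) : Prop :=
  [/\ adj v a, adj v b, adj v c & uniq [:: a; b; c]].

Definition has_claw_plus_edge (G : sgraph) := exists v a b c x y : G,
  claw_at v a b c /\
  [/\ adj x y, x \in [:: v; a; b; c]
    & [set x; y] \notin [:: [set v; a]; [set v; b]; [set v; c]]].

Lemma star_edge_line_paw (G : sgraph) (v a b c x y : G) :
  claw_at v a b c -> adj x y -> x \in [:: v; a] ->
  [set x; y] \notin [:: [set v; a]; [set v; b]; [set v; c]] -> has_paw (line_graph G).
Proof.
move=> [va vb vc]; rewrite /= !inE !negb_or => /and3P[/andP[ab ac] bc _] xy xva.
move=> /and3P[xy_a xy_b xy_c].
exists (mk_edge va), (mk_edge vb), (mk_edge vc), (mk_edge xy); split.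
- by rewrite mk_edge_adj /edges_meet !eqxx (negbTE ab) (negbTE (adj_neq vb)).
- by rewrite mk_edge_adj /edges_meet !eqxx (negbTE ac) (negbTE (adj_neq vc)).
- by rewrite mk_edge_adj /edges_meet !eqxx (negbTE bc) (negbTE (adj_neq vc)).
- rewrite mk_edge_adjE eq_sym xy_a; apply/set0Pn; exists x.
  by rewrite inE set21 andbT !inE; case/orP: xva => ->; rewrite ?orbT.
- by rewrite -!val_eqE xy_b xy_c.
Qed.

Lemma claw_plus_edge_line_paw (G : sgraph) : has_claw_plus_edge G -> has_paw (line_graph G).
Proof.
move=> [v [a [b [c [x [y [[va vb vc abc] [xy]]]]]]]].
have [ab ac bc] : [/\ a != b, a != c & b != c].
  by move: abc; rewrite /= !inE !negb_or => /and3P[/andP[-> ->] -> _].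
move=> + nS; rewrite !inE => /or4P[] xS.
- by apply: (star_edge_line_paw (And4 va vb vc abc) xy) nS; rewrite !inE xS.
- by apply: (star_edge_line_paw (And4 va vb vc abc) xy) nS; rewrite !inE xS orbT.
- have bac : claw_at v b a c by split; rewrite //= !inE !negb_or eq_sym ab ac bc.
  apply: (star_edge_line_paw bac xy); first by rewrite !inE xS orbT.
  by apply: contra nS; rewrite !inE => /or3P[] ->; rewrite ?orbT.
- have cab : claw_at v c a b by split; rewrite //= !inE !negb_or !(eq_sym c) ab ac bc.
  apply: (star_edge_line_paw cab xy); first by rewrite !inE xS orbT.
  by apply: contra nS; rewrite !inE => /or3P[] ->; rewrite ?orbT.
Qed.

Lemma enum_isomorphic (G : sgraph) n (r : rel 'I_n) (rs : symmetric r) (ri : irreflexive r)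
  (x0 : G) (s : seq G) : size s = n -> uniq s -> (forall z, z \in s) ->
  (forall i j : 'I_n, adj (nth x0 s i) (nth x0 s j) = r i j) -> isomorphic G (SGraph rs ri).
Proof.
move=> sz s_uniq s_all s_adj; subst n.
pose g (i : 'I_(size s)) := nth x0 s i.
pose f (z : G) : 'I_(size s) := Ordinal (etrans (index_mem z s) (s_all z)).
have fK z : nth x0 s (f z) = z by rewrite nth_index.
have gK : cancel g f by move=> i; apply: val_inj; rewrite /= index_uniq.
exists f; split; first by exists g.
by move=> x y /=; rewrite -s_adj !fK.
Qed.

Lemma connected_closed (G : sgraph) (S : pred G) w : connected G -> w \in S ->
  (forall x y, x \in S -> adj x y -> y \in S) -> forall z, z \in S.
Proof.
move=> [_ conn] wS closed z; have /connectP[p p_path ->] := conn w z.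
by elim: p w wS p_path => [|y p IH] w wS //= /andP[wy /IH]; apply; apply: closed wy.
Qed.

Lemma claw_isomorphic (G : sgraph) (v a b c : G) : connected G ->
  claw_at v a b c -> ~ has_claw_plus_edge G -> is_claw G.
Proof.
move=> conn cl nC; have [va vb vc abc] := cl.
pose S := [:: v; a; b; c].
have spoke x y : x \in S -> adj x y ->
    (v \in [set x; y]) && ([set x; y] \in [:: [set v; a]; [set v; b]; [set v; c]]).
  move=> xS xy; have sp : [set x; y] \in [:: [set v; a]; [set v; b]; [set v; c]].
    by apply/negPn/negP => nS; apply: nC; exists v, a, b, c, x, y.
  by rewrite sp andbT; move: sp; rewrite !in_cons in_nil => /or4P[]// /eqP->; rewrite set21.
have closed x y : x \in S -> adj x y -> y \in S.
  move=> xS xy; case/andP: (spoke x y xS xy) => _; rewrite !inE => /or3P[]/eqP E;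
  by have := set22 x y; rewrite E !inE => /orP[]->; rewrite ?orbT.
have S_all := connected_closed conn (mem_head v [:: a; b; c]) closed.
have leaves x y : x \in [:: a; b; c] -> y \in [:: a; b; c] -> adj x y = false.
  move=> xl yl; apply/negP => xy; have /andP[+ _] := spoke x y (mem_behead (s := S) xl) xy.
  move: xl yl; rewrite !inE => /or3P[]/eqP-> /or3P[]/eqP->;
  by rewrite ?(negbTE (adj_neq va)) ?(negbTE (adj_neq vb)) ?(negbTE (adj_neq vc)).
have S_uniq : uniq S.
  by rewrite cons_uniq abc andbT !inE !negb_or !adj_neq.
apply: (@enum_isomorphic G 4 claw_rel claw_rel_sym claw_rel_irr v S) => //.
case=> [[|[|[|[|i]]]] hi] //; case=> [[|[|[|[|j]]]] hj] //=;
  rewrite ?adj_irr ?va ?vb ?vc ?(adj_sym _ v) ?va ?vb ?vc // leaves // !inE eqxx ?orbT //=.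
Qed.

Section MaxDegree2.
Variable G : sgraph.
Hypothesis G_connected : connected G.
Hypothesis deg2 :
  forall z u w t : G, adj z u -> adj z w -> adj z t -> uniq [:: u; w; t] -> False.

Lemma exists_maximal_path : exists (x : G) (p : seq G),
  [/\ path (@adj G) x p, uniq (x :: p),
      forall y, adj x y -> y \in x :: p & forall y, adj (last x p) y -> y \in x :: p].
Proof.
pose P n := [exists x : G, exists p : n.-tuple G, path (@adj G) x p && uniq (x :: p)].
have P_size x (p : seq G) : path (@adj G) x p -> uniq (x :: p) -> P (size p).
  by move=> pp up; apply/existsP; exists x; apply/existsP; exists (in_tuple p); rewrite pp.
have [x0 _] : exists x0 : G, x0 \in G by apply/card_gt0P; case: G_connected.
have P0 : exists n, P n by exists 0; apply: (P_size x0 [::]).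
have P_bound n : P n -> n <= #|G|.
  case/existsP=> x /existsP[p /andP[_ /card_uniqP cp]].
  by have := max_card (mem (x :: p)); rewrite cp /= size_tuple; apply: ltnW.
case: (ex_maxnP P0 P_bound) => n /existsP[x /existsP[p /andP[pp up]]] n_max.
exists x, p; split=> // y xy; apply/negPn/negP => yp.
  suff : size (x :: p) <= n by rewrite /= size_tuple ltnn.
  by apply/n_max/(P_size y); rewrite /= 1?adj_sym ?xy ?yp.
suff : size (rcons p y) <= n by rewrite size_rcons size_tuple ltnn.
by apply/n_max/(P_size x); rewrite ?rcons_path ?pp ?xy // -rcons_cons rcons_uniq yp.
Qed.

Section MaximalPath.
Variables (x : G) (p : seq G).
Hypotheses (p_path : path (@adj G) x p) (p_uniq : uniq (x :: p)).
Hypotheses (x_closed : forall y, adj x y -> y \in x :: p)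
           (last_closed : forall y, adj (last x p) y -> y \in x :: p).

Let k := size p.
Let v i := nth x (x :: p) i.

Lemma v_adj_succ i : i < k -> adj (v i) (v i.+1).
Proof. exact: (pathP x p_path). Qed.

Lemma v_adj_pred i : 0 < i -> i <= k -> adj (v i) (v i.-1).
Proof. by move=> i0 ik; rewrite adj_sym -{2}(prednK i0) v_adj_succ //; lia. Qed.

Lemma v_eq i j : i <= k -> j <= k -> (v i == v j) = (i == j).
Proof. by move=> ik jk; rewrite /v nth_uniq. Qed.

Lemma v_last : v k = last x p.
Proof. by rewrite /v /k -[size p]/(size (x :: p)).-1 nth_last. Qed.

Lemma v_mem i : i <= k -> v i \in x :: p. Proof. by move=> ik; rewrite mem_nth. Qed.

Lemma v_closed i y : i <= k -> adj (v i) y -> y \in x :: p.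
Proof.
move=> ik; case: (posnP i) => [->|i0]; first exact: x_closed.
case: (eqVneq i k) => [->|ik']; first by rewrite v_last; apply: last_closed.
move=> iy; apply/negPn/negP => yp.
have ik1 : i < k by rewrite ltn_neqAle ik' ik.
apply: (deg2 (v_adj_pred i0 ik) (v_adj_succ ik1) iy).
rewrite /= !inE !negb_or v_eq; try lia.
rewrite (_ : i.-1 == i.+1 = false) //=; last lia.
by rewrite andbT; apply/andP; split; apply: contraNneq yp => <-; apply: v_mem; lia.
Qed.

Lemma v_spans z : z \in x :: p.
Proof.
apply: connected_closed G_connected (mem_head x p) _ z => a b ap; rewrite -(nth_index x ap).
by apply: v_closed; rewrite -ltnS; have := ap; rewrite -index_mem.
Qed.

Lemma v_chord i j : i < j -> j <= k -> adj (v i) (v j) -> (j == i.+1) || (i == 0) && (j == k).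
Proof.
move=> ij jk vij; case: (eqVneq j i.+1) => //= ji.
have i0 : i = 0.
  apply/eqP; apply: contraT => i0; exfalso.
  have [ip ik] : 0 < i /\ i < k by lia.
  apply: (deg2 (v_adj_pred ip (ltnW ik)) (v_adj_succ ik) vij).
  by rewrite /= !inE !negb_or !v_eq //; lia.
subst i; rewrite eqxx /=; apply: contraT => jk'; exfalso.
have [jp jk1] : 0 < j /\ j < k by lia.
rewrite adj_sym in vij; apply: (deg2 (v_adj_pred jp jk) (v_adj_succ jk1) vij).
by rewrite /= !inE !negb_or !v_eq //; lia.
Qed.

(* The path closes up through an edge x -- last x p that is not one of its own edges. *)
Let wrap := adj x (last x p) && (1 < k).

Lemma v_adj_lt i j : i < j -> j <= k ->
  adj (v i) (v j) = (j == i.+1) || [&& wrap, i == 0 & j == k].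
Proof.
move=> ij jk; case: (eqVneq j i.+1) => [->|ji] /=; first by rewrite v_adj_succ //; lia.
apply/idP/idP => [vij|/and3P[/andP[w _] /eqP-> /eqP->]]; last by rewrite v_last.
case/orP: (v_chord ij jk vij) => [/eqP ji'|/andP[/eqP i0 /eqP jk']].
  by rewrite ji' eqxx in ji.
by move: vij; rewrite i0 jk' v_last /wrap => ->; rewrite !eqxx /=; lia.
Qed.

Lemma v_adjE i j : i <= k -> j <= k -> adj (v i) (v j) =
  [|| i.+1 == j, j.+1 == i | wrap && ((i == 0) && (j == k) || (j == 0) && (i == k))].
Proof.
move=> ik jk; case: (ltngtP i j) => [ij|ji|<-].
- by rewrite v_adj_lt //; case: wrap; lia.
- by rewrite adj_sym v_adj_lt //; case: wrap; lia.
- by rewrite adj_irr /wrap; case: (adj x _) => /=; lia.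
Qed.

Lemma maximal_path_path_or_cycle : is_path G \/ is_cycle G.
Proof.
have ords n (i : 'I_n.+1) : i <= n by rewrite -ltnS.
case: (boolP wrap) => [w|nw].
- right; exists k.+1; split; first by case/andP: w => _; lia.
  apply: (@enum_isomorphic _ _ _ _ _ x (x :: p)) => // [|i j]; first exact: v_spans.
  rewrite v_adjE ?ords // w /cycle_rel -val_eqE /=.
  have modS a : a <= k -> a.+1 %% k.+1 = if a == k then 0 else a.+1.
    by move=> ak; case: eqP => [->|ne]; [rewrite modnn | rewrite modn_small; lia].
  rewrite !modS ?ords //; case/andP: w => _ k1; have := ords _ i; have := ords _ j.
  by case: ifP => E1; case: ifP => E2; move: E1 E2; lia.
- left; exists k.+1.
  apply: (@enum_isomorphic _ _ _ _ _ x (x :: p)) => // [|i j]; first exact: v_spans.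
  by rewrite v_adjE ?ords // (negbTE nw) orbF.
Qed.

End MaximalPath.

Lemma max_degree2_path_or_cycle : is_path G \/ is_cycle G.
Proof.
have [x [p [pp up xc lc]]] := exists_maximal_path.
exact: maximal_path_path_or_cycle pp up xc lc.
Qed.

End MaxDegree2.

Lemma path_cycle_or_claw (G : sgraph) :
  connected G -> ~ has_claw_plus_edge G -> [\/ is_path G, is_cycle G | is_claw G].
Proof.
move=> conn nC.
case: (classic (exists v a b c : G, claw_at v a b c)) => [[v [a [b [c cl]]]]|noclaw].
  exact/Or33/(claw_isomorphic conn cl nC).
have deg2 (z u w t : G) : adj z u -> adj z w -> adj z t -> uniq [:: u; w; t] -> False.
  by move=> zu zw zt uwt; apply: noclaw; exists z, u, w, t.
by case: (max_degree2_path_or_cycle conn deg2) => ?; [apply: Or31 | apply: Or32].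
Qed.

Lemma claw_plus_edge_iter_line_not_representable (G : sgraph) :
  has_claw_plus_edge G -> forall n, 4 <= n -> ~ representable (iter_line n G).
Proof.
move=> hC n n4.
have paw m : has_paw (iter_line m.+1 G).
  by elim: m => [|m IH]; [exact: claw_plus_edge_line_paw | exact: paw_line_paw].
have -> : n = (n - 4).+4 by lia.
exact/W4_line_not_representable/diamond_line_W4/paw_line_diamond/paw.
Qed.

Theorem theorem4 (G : sgraph) :
  connected G -> ~ is_path G -> ~ is_cycle G -> ~ is_claw G ->
  forall n : nat, 4 <= n -> ~ representable (iter_line n G).
Proof.
move=> conn nP nCy nK n n4.
case: (classic (has_claw_plus_edge G)) => [hC|nC].
  exact: claw_plus_edge_iter_line_not_representable.
by case: (path_cycle_or_claw conn nC).
Qed.
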